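(* Let $J$ be a Jordan algebra with unit element $1$ over a field $F$ of characteristic $\neq 2,3$, and let $d$ be a derivation with invertible values of $J$. If $I$ is an ideal of $J$ with $I \subseteq \ker(d)$, then $I^2 = 0$.
   Context: A Jordan algebra is a commutative algebra satisfying $(x^2,y,x)=0$, where $(a,b,c)=(ab)c-a(bc)$. In a Jordan algebra $J$ with unit $1$, an element $x$ is invertible if there exists $y \in J$ with $xy = 1$ and $x^2 y = x$. A derivation with invertible values of $J$ is a nonzero derivation $d$ of $J$ such that for every $x \in J$, $d(x)$ is either invertible or equal to $0$. *)

From HB Require Import structures.
From mathcomp Require Import all_boot all_order all_algebra.
Set Implicit Arguments. Unset Strict Implicit. Unset Printing Implicit Defensive.
Import GRing.Theory.
Local Open Scope ring_scope.

Section Jordan.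
Variables (F : fieldType) (J : lmodType F).
Variables (mul : J -> J -> J) (one : J).

Definition assoc3 (a b c : J) : J := mul (mul a b) c - mul a (mul b c).

Definition is_unital_jordan : Prop :=
  [/\ forall (a : F) (x y z : J), mul (a *: x + y) z = a *: mul x z + mul y z,
      forall (a : F) (x y z : J), mul x (a *: y + z) = a *: mul x y + mul x z,
      forall x y : J, mul x y = mul y x,
      forall x y : J, assoc3 (mul x x) y x = 0
    & forall x : J, mul one x = x /\ mul x one = x].

Definition jinvertible (x : J) : Prop :=
  exists y : J, mul x y = one /\ mul (mul x x) y = x.

Definition is_derivation (d : J -> J) : Prop :=
  [/\ forall (a : F) (x y : J), d (a *: x + y) = a *: d x + d y
    & forall x y : J, d (mul x y) = mul (d x) y + mul x (d y)].

Definition is_derivation_inv_values (d : J -> J) : Prop :=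
  [/\ is_derivation d, exists x : J, d x <> 0
    & forall x : J, d x = 0 \/ jinvertible (d x)].

Definition is_ideal (I : J -> Prop) : Prop :=
  [/\ I 0,
      forall (a : F) (x y : J), I x -> I y -> I (a *: x + y)
    & forall x y : J, I y -> I (mul x y)].

End Jordan.

From HB Require Import structures.
From mathcomp Require Import all_boot all_order all_algebra.
Set Implicit Arguments. Unset Strict Implicit. Unset Printing Implicit Defensive.
Import GRing.Theory.
Local Open Scope ring_scope.

(* Pick y0 with u := d y0 invertible, say u v = 1. For p in I, y0 p lies in
   I, so 0 = d (y0 p) = u p: the ideal I annihilates u. Linearizing the Jordan
   identity (a^2, u, a) = 0 gives (a^2, u, b) + 2 (ab, u, a) = 0; at a = x in I
   and b = v every term but (x^2, u, v) = -x^2 (u v) = -x^2 vanishes, so I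
   consists of square-zero elements, and x z = 0 follows by polarizing
   (x + z)^2 = 0. *)

Section CubicPolarization.
Variables (V W : zmodType) (G : V -> V -> V -> W).
Hypothesis GDl : forall a a' b c, G (a + a') b c = G a b c + G a' b c.
Hypothesis GDm : forall a b b' c, G a (b + b') c = G a b c + G a b' c.
Hypothesis GDr : forall a b c c', G a b (c + c') = G a b c + G a b c'.

Let quad a b := G a a b + G a b a + G b a a.

Lemma cube_addE a b :
  G (a + b) (a + b) (a + b) = G a a a + G b b b + (quad a b + quad b a).
Proof.
rewrite /quad !(GDl, GDm, GDr).
by rewrite (AC ((2*2)*(2*2)) ((1*8)*((2*3*5)*(7*6*4)))).
Qed.

Lemma quad_opp a b : quad a (- b) = - quad a b /\ quad (- b) a = quad b a.
Proof.
have N0 (f : V -> W) : (forall x y, f (x + y) = f x + f y) -> forall x, f (- x) = - f x.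
  move=> fD x; apply/eqP; rewrite -subr_eq0 opprK -fD addNr.
  by apply/eqP/(@addrI _ (f 0)); rewrite -fD !addr0.
have Nl b' c := N0 _ (fun x y => GDl x y b' c).
have Nm a' c := N0 _ (fun x y => GDm a' x y c).
have Nr a' b' := N0 _ (GDr a' b').
by rewrite /quad !(Nl, Nm, Nr) !opprK -!opprD.
Qed.

Hypothesis G_diag : forall t, G t t t = 0.
Hypothesis W_two_torsionfree : forall w : W, w + w = 0 -> w = 0.

Lemma cubic_polarization a b : G a a b + G a b a + G b a a = 0.
Proof.
have quad_sym x y : quad x y + quad y x = 0.
  by have := cube_addE x y; rewrite !G_diag !add0r => <-.
case: (quad_opp a b) => Ea Eb.
apply: W_two_torsionfree.
have /eqP := quad_sym a (- b); rewrite Ea Eb addrC subr_eq0 => /eqP Eba.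
by rewrite -/(quad a b) -{2}Eba quad_sym.
Qed.

End CubicPolarization.

Section UnitalJordan.
Variables (F : fieldType) (J : lmodType F) (mul : J -> J -> J) (one : J).
Hypothesis HJ : is_unital_jordan mul one.

Lemma jmulDl x y z : mul (x + y) z = mul x z + mul y z.
Proof. by case: HJ => mZl _ _ _ _; have := mZl 1 x y z; rewrite !scale1r. Qed.

Lemma jmulC x y : mul x y = mul y x.
Proof. by case: HJ. Qed.

Lemma jmulDr x y z : mul x (y + z) = mul x y + mul x z.
Proof. by rewrite !(jmulC x) jmulDl. Qed.

Lemma jmul0l x : mul 0 x = 0.
Proof. by apply/(@addrI _ (mul 0 x)); rewrite -jmulDl !addr0. Qed.

Lemma jmul0r x : mul x 0 = 0.
Proof. by rewrite jmulC jmul0l. Qed.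

Lemma jmulr1 x : mul x one = x.
Proof. by case: HJ => _ _ _ _ /(_ x) []. Qed.

Hypothesis two_neq0 : (2%:R : F) != 0.

Lemma double_eq0 (w : J) : w + w = 0 -> w = 0.
Proof.
move=> ww0; have /eqP : (2%:R : F) *: w = 0 by rewrite scaler_nat mulr2n.
by rewrite scaler_eq0 (negbTE two_neq0) => /eqP.
Qed.

Lemma jordan_linearized y a b :
  assoc3 mul (mul a a) y b + assoc3 mul (mul a b) y a + assoc3 mul (mul b a) y a = 0.
Proof.
apply: (@cubic_polarization _ _ (fun a b c => assoc3 mul (mul a b) y c)).
- by move=> *; rewrite /assoc3 !jmulDl opprD addrACA.
- by move=> *; rewrite /assoc3 !(jmulDl, jmulDr) opprD addrACA.
- by move=> *; rewrite /assoc3 !jmulDr opprD addrACA.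
- by case: HJ.
- exact: double_eq0.
Qed.

Lemma jmul_eq0_of_sqr x z :
  mul x x = 0 -> mul z z = 0 -> mul (x + z) (x + z) = 0 -> mul x z = 0.
Proof.
move=> xx0 zz0; rewrite !(jmulDl, jmulDr) xx0 zz0 add0r addr0 (jmulC z x).
exact: double_eq0.
Qed.

Variable I : J -> Prop.
Hypothesis HI : is_ideal mul I.

Lemma ideal_sqr_eq0 u v :
  mul u v = one -> (forall p, I p -> mul u p = 0) -> forall x, I x -> mul x x = 0.
Proof.
case: HI => _ _ IM uv1 uI0 x Ix.
have assoc_ideal p c : I p -> assoc3 mul p u c = - mul p (mul u c).
  by move=> Ip; rewrite /assoc3 (jmulC p u) uI0 // jmul0l sub0r.
have := jordan_linearized u x v.
rewrite !assoc_ideal ?uv1 ?jmulr1 ?uI0 ?jmul0r ?oppr0 ?addr0 //; try exact: IM.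
- by move/eqP; rewrite oppr_eq0 => /eqP.
- by rewrite jmulC; apply: IM.
Qed.

Lemma derivation_ideal_annihilated d :
  is_derivation mul d -> (forall x, I x -> d x = 0) ->
  forall y p, I p -> mul (d y) p = 0.
Proof.
case: HI => _ _ IM [_ dM] Iker y p Ip.
by have := Iker _ (IM y _ Ip); rewrite dM (Iker p) // jmul0r addr0.
Qed.

End UnitalJordan.

Theorem lemma3 (F : fieldType)
    (hchar2 : (2%:R : F) != 0) (hchar3 : (3%:R : F) != 0)
    (J : lmodType F) (mul : J -> J -> J) (one : J)
    (HJ : is_unital_jordan mul one)
    (d : J -> J) (Hd : is_derivation_inv_values mul one d)
    (I : J -> Prop) (HI : is_ideal mul I)
    (HIker : forall x : J, I x -> d x = 0) :
  forall x y : J, I x -> I y -> mul x y = 0.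
Proof.
move=> x z Ix Iz.
case: Hd => dder [y0 dy0_neq0] dinv.
have [//|[v [uv1 _]]] := dinv y0.
have Isqr := ideal_sqr_eq0 HJ hchar2 HI uv1 (derivation_ideal_annihilated HJ HI dder HIker y0).
apply: (jmul_eq0_of_sqr HJ hchar2); apply: Isqr => //.
by case: HI => _ ID _; rewrite -[x]scale1r; apply: ID.
Qed.
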